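(* Restrict to the category $\overline{\mathbf{dCat}}$ of strict double categories and strict double functors. For each $n\ge1$ let $H_n\gamma:\overline{\mathbf{dCat}}\to\mathbf{Cat}$ send $C$ to the $n$-th horizontal category $H^{\gamma C}_n$ and $F$ to the restriction of $\tau(\gamma F)$ to $H^{\gamma C}_n$, and for $m\le n$ let $\nu_{m,n}:H_m\gamma\Rightarrow H_n\gamma$ be given by the inclusions $H^{\gamma C}_m\subseteq H^{\gamma C}_n$. Then the functor $\gamma^\tau=\tau\gamma$, sending $C$ to the transversal category $\tau(\gamma C)$ and $F$ to $\tau(\gamma F)$, is the colimit $\varinjlim_n H_n\gamma$ of this diagram.
   Context: For a strict double category $C$: $C_0$ is the category of objects and vertical morphisms, $C_1$ the category of horizontal morphisms and 2-morphisms (vertical composition); horizontal composition $\ast$ is strictly associative and unital. A 2-morphism is globular if its source and target are identity vertical morphisms. The globularily generated piece $\gamma C$ is the smallest sub-double category of $C$ containing all objects, vertical and horizontal morphisms and globular 2-morphisms; $\gamma F$ is the restriction of a double functor $F$. The transversal category $\tau C$ has objects the vertical morphisms and morphisms the 2-morphisms of $C$ (from $s\Phi$ to $t\Phi$), composed horizontally; for a strict double functor $F$, $\tau F$ acts by the morphism function of $F_0$ on objects and that of $F_1$ on morphisms. For a strict double category $E$: $H^E_1$ consists of globular 2-morphisms and horizontal identities of vertical morphisms; $V^E_1$ is the subcategory of $E_1$ generated by $H^E_1$ under vertical composition; for $n>1$, $H^E_n$ is the set of horizontal composites of composable finite sequences of morphisms of $V^E_{n-1}$ and $V^E_n$ the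 subcategory of $E_1$ it generates. $H^E_n$ forms a subcategory of $\tau E$ with all objects (the $n$-th horizontal category), and strict double functors map $H^E_n$ into $H^{E'}_n$ between globularily generated double categories. *)

From Stdlib Require Import ProofIrrelevance ClassicalEpsilon PeanoNat.

Set Implicit Arguments.
Unset Strict Implicit.

(* [cmp g f] = g o f, only meaningful when [cod f = dom g].           *)
Record Cat := {
  ob : Type;
  mor : Type;
  dom : mor -> ob;
  cod : mor -> ob;
  idm : ob -> mor;
  cmp : mor -> mor -> mor;
  dom_idm : forall x, dom (idm x) = x;
  cod_idm : forall x, cod (idm x) = x;
  dom_cmp : forall f g, cod f = dom g -> dom (cmp g f) = dom f;
  cod_cmp : forall f g, cod f = dom g -> cod (cmp g f) = cod g;
  cmp_idl : forall f, cmp (idm (cod f)) f = f;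
  cmp_idr : forall f, cmp f (idm (dom f)) = f;
  cmp_assoc : forall f g h, cod f = dom g -> cod g = dom h ->
      cmp h (cmp g f) = cmp (cmp h g) f }.
Arguments dom {c} _.
Arguments cod {c} _.
Arguments idm {c} _.
Arguments cmp {c} _ _.

Record Functor (C D : Cat) := {
  fo : ob C -> ob D;
  fm : mor C -> mor D;
  fm_dom : forall f, dom (fm f) = fo (dom f);
  fm_cod : forall f, cod (fm f) = fo (cod f);
  fm_idm : forall x, fm (idm x) = idm (fo x);
  fm_cmp : forall f g, cod f = dom g -> fm (cmp g f) = cmp (fm g) (fm f) }.
Arguments fo {C D} _ _.
Arguments fm {C D} _ _.

Definition feq (C D : Cat) (F G : Functor C D) : Prop :=
  (forall x, fo F x = fo G x) /\ (forall f, fm F f = fm G f).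

Definition fid (C : Cat) : Functor C C.
Proof.
  refine {| fo := fun x => x; fm := fun f => f |}; reflexivity.
Defined.

Definition fcomp (C D E : Cat) (G : Functor D E) (F : Functor C D) : Functor C E.
Proof.
  refine {| fo := fun x => fo G (fo F x); fm := fun f => fm G (fm F f) |}.
  - intros f; now rewrite fm_dom, fm_dom.
  - intros f; now rewrite fm_cod, fm_cod.
  - intros x; now rewrite fm_idm, fm_idm.
  - intros f g h. rewrite fm_cmp by exact h. apply fm_cmp.
    now rewrite fm_cod, fm_dom, h.
Defined.

Definition subcat (C : Cat) (P : mor C -> Prop)
  (Pid : forall x, P (idm x))
  (Pcmp : forall f g, cod f = dom g -> P f -> P g -> P (cmp g f)) : Cat.
Proof.
  refine {| ob := ob C; mor := {f : mor C | P f};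
            dom := fun f => dom (proj1_sig f);
            cod := fun f => cod (proj1_sig f);
            idm := fun x => exist _ (idm x) (Pid x);
            cmp := fun g f =>
              match excluded_middle_informative
                      (cod (proj1_sig f) = dom (proj1_sig g)) with
              | left h => exist _ (cmp (proj1_sig g) (proj1_sig f))
                              (Pcmp _ _ h (proj2_sig f) (proj2_sig g))
              | right _ => f end |}.
  - intros x; apply dom_idm.
  - intros x; apply cod_idm.
  - intros [f pf] [g pg] h; simpl in *.
    destruct excluded_middle_informative; [apply dom_cmp|]; tauto.
  - intros [f pf] [g pg] h; simpl in *.
    destruct excluded_middle_informative; [apply cod_cmp|]; tauto.
  - intros [f pf]; simpl.
    destruct excluded_middle_informative as [h|h];
      [|exfalso; apply h; symmetry; apply dom_idm].
    apply eq_sig_hprop; [intros; apply proof_irrelevance|]. apply cmp_idl.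
  - intros [f pf]; simpl.
    destruct excluded_middle_informative as [h|h];
      [|exfalso; apply h; apply cod_idm].
    apply eq_sig_hprop; [intros; apply proof_irrelevance|]. apply cmp_idr.
  - intros [f pf] [g pg] [k pk] h1 h2; simpl in *.
    destruct (excluded_middle_informative (cod g = dom k)) as [e1|e1]; [|tauto].
    destruct (excluded_middle_informative (cod f = dom g)) as [e2|e2]; [|tauto].
    simpl.
    destruct excluded_middle_informative as [e3|e3];
      [|exfalso; apply e3; rewrite cod_cmp; assumption].
    destruct excluded_middle_informative as [e4|e4];
      [|exfalso; apply e4; rewrite dom_cmp; assumption].
    apply eq_sig_hprop; [intros; apply proof_irrelevance|]. simpl.
    now apply cmp_assoc.
Defined.

Lemma subcat_cmpE (C : Cat) P Pid Pcmp (f g : mor (@subcat C P Pid Pcmp)) :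
  cod f = dom g -> proj1_sig (cmp g f) = cmp (proj1_sig g) (proj1_sig f).
Proof.
  destruct f as [f pf], g as [g pg]; simpl; intros h.
  destruct excluded_middle_informative; [reflexivity|tauto].
Qed.

Definition fincl (C : Cat) P Pid Pcmp : Functor (@subcat C P Pid Pcmp) C.
Proof.
  refine (@Build_Functor (@subcat C P Pid Pcmp) C (fun x => x)
            (fun f => proj1_sig f) _ _ _ _); try reflexivity.
  intros f g h; now apply subcat_cmpE.
Defined.

Definition frestr (C D : Cat) (F : Functor C D) P Pid Pcmp Q Qid Qcmp
  (HF : forall f, P f -> Q (fm F f)) :
  Functor (@subcat C P Pid Pcmp) (@subcat D Q Qid Qcmp).
Proof.
  refine (@Build_Functor (@subcat C P Pid Pcmp) (@subcat D Q Qid Qcmp) (fo F)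
            (fun f => exist _ (fm F (proj1_sig f)) (HF _ (proj2_sig f))) _ _ _ _).
  - intros f; simpl; apply fm_dom.
  - intros f; simpl; apply fm_cod.
  - intros x; apply eq_sig_hprop; [intros; apply proof_irrelevance|]; apply fm_idm.
  - intros f g h; apply eq_sig_hprop; [intros; apply proof_irrelevance|].
    cbn [proj1_sig].
    rewrite (subcat_cmpE h).
    rewrite (subcat_cmpE (C := D) (f := exist _ (fm F (proj1_sig f)) (HF _ (proj2_sig f)))
                        (g := exist _ (fm F (proj1_sig g)) (HF _ (proj2_sig g)))).
    + apply fm_cmp; exact h.
    + simpl; rewrite fm_cod, fm_dom; f_equal; exact h.
Defined.

Definition fcorestr (C D : Cat) (F : Functor C D) Q Qid Qcmp
  (HF : forall f, Q (fm F f)) : Functor C (@subcat D Q Qid Qcmp).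
Proof.
  refine (@Build_Functor C (@subcat D Q Qid Qcmp) (fo F)
            (fun f => exist _ (fm F f) (HF f)) _ _ _ _).
  - intros f; simpl; apply fm_dom.
  - intros f; simpl; apply fm_cod.
  - intros x; apply eq_sig_hprop; [intros; apply proof_irrelevance|]; apply fm_idm.
  - intros f g h; apply eq_sig_hprop; [intros; apply proof_irrelevance|].
    cbn [proj1_sig].
    rewrite (subcat_cmpE (C := D) (f := exist _ (fm F f) (HF f))
                        (g := exist _ (fm F g) (HF g))).
    + apply fm_cmp; exact h.
    + simpl; rewrite fm_cod, fm_dom; f_equal; exact h.
Defined.

(* Strict double categories, as internal categories in Cat:           *)
(*   C0 = objects and vertical morphisms,                             *)
(*   C1 = horizontal morphisms and 2-morphisms (vertical composition),*)
(*   hs, ht : C1 -> C0 horizontal source/target functors,            *)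
(*   hu : C0 -> C1 horizontal identities,                             *)
(*   hco/hcm : horizontal composition on horizontal morphisms /        *)
(*   2-morphisms, [hco a b] meaningful when [ht a = hs b].            *)
Record DblCat := {
  C0 : Cat;
  C1 : Cat;
  hs : Functor C1 C0;
  ht : Functor C1 C0;
  hu : Functor C0 C1;
  hco : ob C1 -> ob C1 -> ob C1;
  hcm : mor C1 -> mor C1 -> mor C1;
  hs_hu_o : forall x, fo hs (fo hu x) = x;
  hs_hu_m : forall f, fm hs (fm hu f) = f;
  ht_hu_o : forall x, fo ht (fo hu x) = x;
  ht_hu_m : forall f, fm ht (fm hu f) = f;
  hs_hco : forall a b, fo ht a = fo hs b -> fo hs (hco a b) = fo hs a;
  ht_hco : forall a b, fo ht a = fo hs b -> fo ht (hco a b) = fo ht b;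
  hs_hcm : forall p q, fm ht p = fm hs q -> fm hs (hcm p q) = fm hs p;
  ht_hcm : forall p q, fm ht p = fm hs q -> fm ht (hcm p q) = fm ht q;
  dom_hcm : forall p q, fm ht p = fm hs q -> dom (hcm p q) = hco (dom p) (dom q);
  cod_hcm : forall p q, fm ht p = fm hs q -> cod (hcm p q) = hco (cod p) (cod q);
  hcm_idm : forall a b, fo ht a = fo hs b -> hcm (idm a) (idm b) = idm (hco a b);
  hcm_interchange : forall p p' q q',
      fm ht p = fm hs q -> fm ht p' = fm hs q' ->
      cod p = dom p' -> cod q = dom q' ->
      hcm (cmp p' p) (cmp q' q) = cmp (hcm p' q') (hcm p q);
  hco_assoc : forall a b c, fo ht a = fo hs b -> fo ht b = fo hs c ->
      hco (hco a b) c = hco a (hco b c);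
  hcm_assoc : forall p q r, fm ht p = fm hs q -> fm ht q = fm hs r ->
      hcm (hcm p q) r = hcm p (hcm q r);
  hco_unitl : forall a, hco (fo hu (fo hs a)) a = a;
  hco_unitr : forall a, hco a (fo hu (fo ht a)) = a;
  hcm_unitl : forall p, hcm (fm hu (fm hs p)) p = p;
  hcm_unitr : forall p, hcm p (fm hu (fm ht p)) = p }.
Arguments hs {d}.
Arguments ht {d}.
Arguments hu {d}.
Arguments hco {d} _ _.
Arguments hcm {d} _ _.

Record DFunctor (C D : DblCat) := {
  df0 : Functor (C0 C) (C0 D);
  df1 : Functor (C1 C) (C1 D);
  df_hs_o : forall a, fo hs (fo df1 a) = fo df0 (fo hs a);
  df_hs_m : forall p, fm hs (fm df1 p) = fm df0 (fm hs p);
  df_ht_o : forall a, fo ht (fo df1 a) = fo df0 (fo ht a);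
  df_ht_m : forall p, fm ht (fm df1 p) = fm df0 (fm ht p);
  df_hu_o : forall x, fo df1 (fo hu x) = fo hu (fo df0 x);
  df_hu_m : forall f, fm df1 (fm hu f) = fm hu (fm df0 f);
  df_hco : forall a b, fo ht a = fo hs b ->
      fo df1 (hco a b) = hco (fo df1 a) (fo df1 b);
  df_hcm : forall p q, fm ht p = fm hs q ->
      fm df1 (hcm p q) = hcm (fm df1 p) (fm df1 q) }.
Arguments df0 {C D} _.
Arguments df1 {C D} _.

Definition deq (C D : DblCat) (F G : DFunctor C D) : Prop :=
  feq (df0 F) (df0 G) /\ feq (df1 F) (df1 G).

Definition did (C : DblCat) : DFunctor C C.
Proof.
  refine {| df0 := fid (C0 C); df1 := fid (C1 C) |}; reflexivity.
Defined.

Definition dcomp (C D E : DblCat) (G : DFunctor D E) (F : DFunctor C D)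
  : DFunctor C E.
Proof.
  refine {| df0 := fcomp (df0 G) (df0 F); df1 := fcomp (df1 G) (df1 F) |};
    simpl; intros.
  - now rewrite df_hs_o, df_hs_o.
  - now rewrite df_hs_m, df_hs_m.
  - now rewrite df_ht_o, df_ht_o.
  - now rewrite df_ht_m, df_ht_m.
  - now rewrite df_hu_o, df_hu_o.
  - now rewrite df_hu_m, df_hu_m.
  - rewrite df_hco by assumption. apply df_hco.
    now rewrite df_ht_o, df_hs_o, H.
  - rewrite df_hcm by assumption. apply df_hcm.
    now rewrite df_ht_m, df_hs_m, H.
Defined.

Definition globular (C : DblCat) (p : mor (C1 C)) : Prop :=
  (exists x, fm hs p = idm x) /\ (exists y, fm ht p = idm y).

Inductive gam (C : DblCat) : mor (C1 C) -> Prop :=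
| gam_glob p : globular p -> gam p
| gam_vid a : gam (idm a)
| gam_hid f : gam (fm hu f)
| gam_vcmp p q : cod p = dom q -> gam p -> gam q -> gam (cmp q p)
| gam_hcmp p q : fm ht p = fm hs q -> gam p -> gam q -> gam (hcm p q).

Definition gamC1 (C : DblCat) : Cat :=
  @subcat (C1 C) (@gam C) (@gam_vid C) (fun f g h pf pg => gam_vcmp h pf pg).

Definition gamIncl (C : DblCat) : Functor (gamC1 C) (C1 C) :=
  @fincl (C1 C) (@gam C) (@gam_vid C) (fun f g h pf pg => gam_vcmp h pf pg).

Definition gam_hcm' (C : DblCat) (p q : mor (gamC1 C)) : mor (gamC1 C) :=
  match excluded_middle_informative
          (fm hs (proj1_sig q) = fm ht (proj1_sig p)) with
  | left h => exist _ (hcm (proj1_sig p) (proj1_sig q))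
                  (gam_hcmp (eq_sym h) (proj2_sig p) (proj2_sig q))
  | right _ => p end.

Lemma gam_hcm'E (C : DblCat) (p q : mor (gamC1 C)) :
  fm ht (proj1_sig p) = fm hs (proj1_sig q) ->
  proj1_sig (gam_hcm' p q) = hcm (proj1_sig p) (proj1_sig q).
Proof.
  intros h; unfold gam_hcm'.
  destruct excluded_middle_informative as [e|e]; [reflexivity|].
  exfalso; apply e; symmetry; exact h.
Qed.

Lemma sig_ext (A : Type) (P : A -> Prop) (x y : {a | P a}) :
  proj1_sig x = proj1_sig y -> x = y.
Proof. apply eq_sig_hprop; intros; apply proof_irrelevance. Qed.

Definition gammaD (C : DblCat) : DblCat.
Proof.
  refine {| C0 := C0 C; C1 := gamC1 C;
            hs := fcomp hs (gamIncl C);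
            ht := fcomp ht (gamIncl C);
            hu := @fcorestr (C0 C) (C1 C) (@hu C) (@gam C) (@gam_vid C)
                    (fun f g h pf pg => gam_vcmp h pf pg) (@gam_hid C);
            hco := @hco C;
            hcm := @gam_hcm' C |}; simpl.
  - apply hs_hu_o.
  - apply hs_hu_m.
  - apply ht_hu_o.
  - apply ht_hu_m.
  - apply hs_hco.
  - apply ht_hco.
  - intros p q h; rewrite gam_hcm'E by exact h; now apply hs_hcm.
  - intros p q h; rewrite gam_hcm'E by exact h; now apply ht_hcm.
  - intros p q h; rewrite gam_hcm'E by exact h; now apply dom_hcm.
  - intros p q h; rewrite gam_hcm'E by exact h; now apply cod_hcm.
  - intros a b h; apply sig_ext; rewrite gam_hcm'E by (simpl; rewrite !fm_idm; f_equal; exact h).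
    now apply hcm_idm.
  - intros p p' q q' h1 h2 h3 h4; apply sig_ext.
    destruct (excluded_middle_informative (cod (proj1_sig p) = dom (proj1_sig p')))
      as [e3|e3]; [|tauto].
    destruct (excluded_middle_informative (cod (proj1_sig q) = dom (proj1_sig q')))
      as [e4|e4]; [|tauto].
    rewrite gam_hcm'E.
    2:{ cbn [proj1_sig]. rewrite !fm_cmp by assumption. rewrite h1, h2. reflexivity. }
    cbn [proj1_sig].
    destruct excluded_middle_informative as [e5|e5].
    2:{ exfalso; apply e5. rewrite !gam_hcm'E by assumption.
        rewrite cod_hcm by exact h1. rewrite dom_hcm by exact h2.
        now rewrite e3, e4. }
    cbn [proj1_sig]. rewrite !gam_hcm'E by assumption.
    now apply hcm_interchange.
  - apply hco_assoc.
  - intros p q r h1 h2; apply sig_ext.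
    assert (e1 : fm ht (proj1_sig (gam_hcm' p q)) = fm hs (proj1_sig r))
      by (rewrite gam_hcm'E by exact h1; rewrite ht_hcm by exact h1; exact h2).
    assert (e2 : fm ht (proj1_sig p) = fm hs (proj1_sig (gam_hcm' q r)))
      by (rewrite gam_hcm'E by exact h2; rewrite hs_hcm by exact h2; exact h1).
    rewrite (gam_hcm'E e1), (gam_hcm'E e2), (gam_hcm'E h1), (gam_hcm'E h2).
    now apply hcm_assoc.
  - apply hco_unitl.
  - apply hco_unitr.
  - intros p; apply sig_ext; rewrite gam_hcm'E by (simpl; apply ht_hu_m).
    apply hcm_unitl.
  - intros p; apply sig_ext; rewrite gam_hcm'E by (simpl; symmetry; apply hs_hu_m).
    apply hcm_unitr.
Defined.

Lemma gam_map (C D : DblCat) (F : DFunctor C D) p :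
  gam p -> gam (fm (df1 F) p).
Proof.
  induction 1 as [p [[x hx] [y hy]]|a|f|p q h _ IHp _ IHq|p q h _ IHp _ IHq].
  - apply gam_glob; split.
    + exists (fo (df0 F) x); now rewrite df_hs_m, hx, fm_idm.
    + exists (fo (df0 F) y); now rewrite df_ht_m, hy, fm_idm.
  - rewrite fm_idm; apply gam_vid.
  - rewrite df_hu_m; apply gam_hid.
  - rewrite fm_cmp by exact h. apply gam_vcmp; auto.
    now rewrite fm_cod, fm_dom, h.
  - rewrite df_hcm by exact h. apply gam_hcmp; auto.
    now rewrite df_ht_m, df_hs_m, h.
Qed.

Definition gammaF (C D : DblCat) (F : DFunctor C D)
  : DFunctor (gammaD C) (gammaD D).
Proof.
  refine (@Build_DFunctor (gammaD C) (gammaD D) (df0 F) (@frestr (C1 C) (C1 D) (df1 F)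
                      (@gam C) (@gam_vid C) (fun f g h pf pg => gam_vcmp h pf pg)
                      (@gam D) (@gam_vid D) (fun f g h pf pg => gam_vcmp h pf pg)
                      (@gam_map C D F)) _ _ _ _ _ _ _ _); simpl.
  - apply df_hs_o.
  - intros p; apply df_hs_m.
  - apply df_ht_o.
  - intros p; apply df_ht_m.
  - apply df_hu_o.
  - intros f; apply sig_ext; apply df_hu_m.
  - apply df_hco.
  - intros p q h; apply sig_ext; simpl.
    rewrite !gam_hcm'E; auto.
    + now apply df_hcm.
    + simpl. now rewrite df_ht_m, df_hs_m, h.
Defined.

Definition tau (C : DblCat) : Cat.
Proof.
  refine {| ob := mor (C0 C); mor := mor (C1 C);
            dom := fm hs; cod := fm ht; idm := fm hu;
            cmp := fun q p => hcm p q |}.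
  - apply hs_hu_m.
  - apply ht_hu_m.
  - intros; now apply hs_hcm.
  - intros; now apply ht_hcm.
  - apply hcm_unitr.
  - apply hcm_unitl.
  - intros; now apply hcm_assoc.
Defined.

Definition tauF (C D : DblCat) (F : DFunctor C D) : Functor (tau C) (tau D).
Proof.
  refine (@Build_Functor (tau C) (tau D) (fm (df0 F)) (fm (df1 F)) _ _ _ _); simpl.
  - apply df_hs_m.
  - apply df_ht_m.
  - apply df_hu_m.
  - intros; now apply df_hcm.
Defined.

(* Horizontal categories H^E_n.  We index by k : nat with n = k + 1:  *)
(*   Hs E 0      = H^E_1  (globular 2-morphisms and horizontal        *)
(*                          identities of vertical morphisms),        *)
(*   vclos P     = subcategory of E_1 generated by P (vertical        *)
(*                 composition), so V^E_n = vclos (H^E_n),            *)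
(*   Hs E (k+1)  = H^E_{k+2} = hclos (V^E_{k+1}).                     *)
Definition H1 (E : DblCat) (p : mor (C1 E)) : Prop :=
  globular p \/ exists f, p = fm hu f.

Inductive vclos (E : DblCat) (P : mor (C1 E) -> Prop) : mor (C1 E) -> Prop :=
| vc_base p : P p -> vclos P p
| vc_id a : vclos P (idm a)
| vc_cmp p q : cod p = dom q -> vclos P p -> vclos P q -> vclos P (cmp q p).

Inductive hclos (E : DblCat) (P : mor (C1 E) -> Prop) : mor (C1 E) -> Prop :=
| hc_base p : P p -> hclos P p
| hc_cmp p q : fm ht p = fm hs q -> hclos P p -> hclos P q -> hclos P (hcm p q).

Fixpoint Hs (E : DblCat) (k : nat) : mor (C1 E) -> Prop :=
  match k with
  | 0 => @H1 E
  | S k => @hclos E (@vclos E (@Hs E k))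
  end.
Arguments Hs : clear implicits.

Lemma Hs_step (E : DblCat) k p : Hs E k p -> Hs E (S k) p.
Proof. intros h; apply hc_base, vc_base, h. Qed.

Lemma Hs_mono (E : DblCat) m n p : m <= n -> Hs E m p -> Hs E n p.
Proof. induction 1; auto using Hs_step. Qed.

Lemma Hs_id (E : DblCat) k (f : ob (tau E)) : Hs E k (@idm (tau E) f).
Proof.
  induction k; [right; exists f; reflexivity|now apply Hs_step].
Qed.

Lemma Hs_cmp (E : DblCat) k (p q : mor (tau E)) :
  cod p = dom q -> Hs E k p -> Hs E k q -> Hs E k (cmp q p).
Proof.
  simpl; intros h hp hq. destruct k as [|k]; simpl in *.
  2: now apply hc_cmp.
  destruct hq as [[[x hx] [y hy]]|[g ->]].
  - destruct hp as [[[x' hx'] [y' hy']]|[f ->]].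
    + left; split.
      * exists x'; now rewrite hs_hcm.
      * exists y; now rewrite ht_hcm.
    + rewrite ht_hu_m in h; subst f. rewrite hcm_unitl. left; split; eauto.
  - rewrite hs_hu_m in h; subst g. rewrite hcm_unitr. exact hp.
Qed.

Definition Hcat (E : DblCat) (k : nat) : Cat :=
  @subcat (tau E) (Hs E k) (@Hs_id E k) (@Hs_cmp E k).

Lemma Hs_map (E E' : DblCat) (F : DFunctor E E') k p :
  Hs E k p -> Hs E' k (fm (df1 F) p).
Proof.
  revert p; induction k as [|k IH]; simpl; intros p hp.
  - destruct hp as [[[x hx] [y hy]]|[f ->]].
    + left; split.
      * exists (fo (df0 F) x); now rewrite df_hs_m, hx, fm_idm.
      * exists (fo (df0 F) y); now rewrite df_ht_m, hy, fm_idm.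
    + right; exists (fm (df0 F) f); apply df_hu_m.
  - induction hp as [p hp|p q h _ IHp _ IHq].
    + apply hc_base. induction hp as [p hp|a|p q h _ IHp _ IHq].
      * apply vc_base; auto.
      * rewrite fm_idm; apply vc_id.
      * rewrite fm_cmp by exact h; apply vc_cmp; auto.
        now rewrite fm_cod, fm_dom, h.
    + rewrite df_hcm by exact h; apply hc_cmp; auto.
      now rewrite df_ht_m, df_hs_m, h.
Qed.

Record DCFun := {
  FO : DblCat -> Cat;
  FM : forall C D : DblCat, DFunctor C D -> Functor (FO C) (FO D);
  FM_ext : forall C D (F G : DFunctor C D), deq F G -> feq (FM F) (FM G);
  FM_id : forall C, feq (FM (did C)) (fid (FO C));
  FM_comp : forall C D E (F : DFunctor C D) (G : DFunctor D E),
      feq (FM (dcomp G F)) (fcomp (FM G) (FM F)) }.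
Arguments FM _ {C D} _.

Record NT (F G : DCFun) := {
  ntc : forall C, Functor (FO F C) (FO G C);
  ntnat : forall C D (H : DFunctor C D),
      feq (fcomp (FM G H) (ntc C)) (fcomp (ntc D) (FM F H)) }.
Arguments ntc {F G} _ _.

Definition nteq (F G : DCFun) (a b : NT F G) : Prop :=
  forall C, feq (ntc a C) (ntc b C).

Definition ntcomp (F G K : DCFun) (b : NT G K) (a : NT F G) : NT F K.
Proof.
  refine {| ntc := fun C => fcomp (ntc b C) (ntc a C) |}.
  intros C D H; destruct (ntnat a H) as [a1 a2], (ntnat b H) as [b1 b2];
    split; simpl in *; intros.
  - now rewrite b1, a1.
  - now rewrite b2, a2.
Defined.

Definition is_colimit_chain (D : nat -> DCFun)
  (nu : forall m n, m <= n -> NT (D m) (D n))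
  (L : DCFun) (iota : forall n, NT (D n) L) : Prop :=
  (forall m n (h : m <= n), nteq (ntcomp (iota n) (nu m n h)) (iota m)) /\
  (forall (G : DCFun) (a : forall n, NT (D n) G),
     (forall m n (h : m <= n), nteq (ntcomp (a n) (nu m n h)) (a m)) ->
     exists t : NT L G,
       (forall n, nteq (ntcomp t (iota n)) (a n)) /\
       (forall t' : NT L G, (forall n, nteq (ntcomp t' (iota n)) (a n)) ->
                           nteq t' t)).

Definition HgF (k : nat) (C D : DblCat) (F : DFunctor C D)
  : Functor (Hcat (gammaD C) k) (Hcat (gammaD D) k) :=
  @frestr (tau (gammaD C)) (tau (gammaD D)) (tauF (gammaF F))
    (Hs (gammaD C) k) (@Hs_id _ k) (@Hs_cmp _ k)
    (Hs (gammaD D) k) (@Hs_id _ k) (@Hs_cmp _ k)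
    (@Hs_map _ _ (gammaF F) k).

Definition Hgamma (k : nat) : DCFun.
Proof.
  refine {| FO := fun C => Hcat (gammaD C) k; FM := @HgF k |}.
  - intros C D F G [[e1 e2] [e3 e4]]; split; simpl; intros.
    + apply e2.
    + apply sig_ext; simpl; apply sig_ext; simpl; apply e4.
  - intros C; split; simpl; intros; [reflexivity|].
    apply sig_ext; simpl; apply sig_ext; reflexivity.
  - intros C D E F G; split; simpl; intros; [reflexivity|].
    apply sig_ext; simpl; apply sig_ext; reflexivity.
Defined.

Definition gammatau : DCFun.
Proof.
  refine {| FO := fun C => tau (gammaD C); FM := fun C D F => tauF (gammaF F) |}.
  - intros C D F G [[e1 e2] [e3 e4]]; split; simpl; intros.
    + apply e2.
    + apply sig_ext; simpl; apply e4.
  - intros C; split; simpl; intros; [reflexivity|].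
    apply sig_ext; reflexivity.
  - intros C D E F G; split; simpl; intros; [reflexivity|].
    apply sig_ext; reflexivity.
Defined.

Definition Hincl (E : DblCat) m n (h : m <= n) : Functor (Hcat E m) (Hcat E n) :=
  @frestr (tau E) (tau E) (fid (tau E))
    (Hs E m) (@Hs_id _ m) (@Hs_cmp _ m)
    (Hs E n) (@Hs_id _ n) (@Hs_cmp _ n)
    (fun p hp => Hs_mono h hp).

Definition nu (m n : nat) (h : m <= n) : NT (Hgamma m) (Hgamma n).
Proof.
  refine (@Build_NT (Hgamma m) (Hgamma n) (fun C => Hincl (gammaD C) h) _).
  intros C D F; split; simpl; intros; [reflexivity|].
  apply sig_ext; reflexivity.
Defined.

Definition iota (k : nat) : NT (Hgamma k) gammatau.
Proof.
  refine (@Build_NT (Hgamma k) gammatau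
    (fun C => @fincl (tau (gammaD C)) (Hs (gammaD C) k) (@Hs_id _ k) (@Hs_cmp _ k)) _).
  intros C D F; split; simpl; intros; reflexivity.
Defined.

(* Every 2-morphism of gamma C is built from globular 2-morphisms and
   horizontal identities by finitely many vertical and horizontal compositions,
   so it lies in some H_n; hence tau (gamma C) is the increasing union of the
   subcategories H^{gamma C}_n.  A compatible family of functors out of the
   H_n therefore glues to a unique functor on tau (gamma C): on a 2-morphism it
   is the value of any component whose H_n contains it, and compatibility makes
   this choice irrelevant. *)
From Stdlib Require Import ClassicalEpsilon PeanoNat.

Lemma Hs_vid (E : DblCat) (a : ob (C1 E)) : Hs E 1 (idm a).
Proof. apply hc_base, vc_id. Qed.

Lemma Hs_vcmp (E : DblCat) k (p q : mor (C1 E)) :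
  cod p = dom q -> Hs E k p -> Hs E k q -> Hs E (S k) (cmp q p).
Proof. intros h hp hq; apply hc_base, vc_cmp; [exact h|apply vc_base..]; assumption. Qed.

Lemma Hs_max_l (E : DblCat) m n p : Hs E m p -> Hs E (max m n) p.
Proof. apply Hs_mono, Nat.le_max_l. Qed.

Lemma Hs_max_r (E : DblCat) m n p : Hs E n p -> Hs E (max m n) p.
Proof. apply Hs_mono, Nat.le_max_r. Qed.

Lemma Hs_gammaD_exhaust (C : DblCat) (p : mor (tau (gammaD C))) :
  exists k, Hs (gammaD C) k p.
Proof.
  (* [gam_ind] is not dependent, so the membership proof is quantified over. *)
  assert (Hgam : forall q, gam q -> forall g : gam q,
             exists k, Hs (gammaD C) k (exist _ q g : mor (tau (gammaD C)))).
  { induction 1 as [r [[x hx] [y hy]]|a|f|r q h Hr IHr Hq IHq|r q h Hr IHr Hq IHq];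
      intros g.
    - exists 0; left; split; [exists x|exists y]; assumption.
    - exists 1.
      assert (E : @idm (gamC1 C) a = exist _ (idm a) g) by (apply sig_ext; reflexivity).
      rewrite <- E; apply Hs_vid.
    - exists 0; right; exists f; apply sig_ext; reflexivity.
    - destruct (IHr Hr) as [m hm], (IHq Hq) as [n hn].
      exists (S (max m n)).
      assert (E : @cmp (gamC1 C) (exist _ q Hq) (exist _ r Hr) = exist _ (cmp q r) g)
        by (apply sig_ext, (subcat_cmpE (C := C1 C)), h).
      rewrite <- E.
      apply Hs_vcmp; [exact h|apply Hs_max_l|apply Hs_max_r]; assumption.
    - destruct (IHr Hr) as [m hm], (IHq Hq) as [n hn].
      exists (max m n).
      assert (E : @cmp (tau (gammaD C)) (exist _ q Hq) (exist _ r Hr) = exist _ (hcm r q) g)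
        by (apply sig_ext; simpl; apply gam_hcm'E, h).
      rewrite <- E.
      apply Hs_cmp; [exact h|apply Hs_max_l|apply Hs_max_r]; assumption. }
  destruct p as [q g]; exact (Hgam q g g).
Qed.

Definition level (C : DblCat) (p : mor (tau (gammaD C))) : nat :=
  proj1_sig (constructive_indefinite_description _ (Hs_gammaD_exhaust C p)).

Arguments level {C} p.

Lemma levelP (C : DblCat) (p : mor (tau (gammaD C))) : Hs (gammaD C) (level p) p.
Proof. exact (proj2_sig (constructive_indefinite_description _ (Hs_gammaD_exhaust C p))). Qed.

Arguments levelP {C} p.

Definition is_cocone (G : DCFun) (a : forall n, NT (Hgamma n) G) : Prop :=
  forall m n (h : m <= n), nteq (ntcomp (a n) (nu h)) (a m).

Arguments is_cocone {G} a.

Lemma iota_cocone : is_cocone iota.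
Proof. intros m n h C; split; reflexivity. Qed.

Section Mediator.

Variables (G : DCFun) (a : forall n, NT (Hgamma n) G).
Hypothesis a_cocone : is_cocone a.

Lemma cocone_fo {C : DblCat} k x : fo (ntc (a k) C) x = fo (ntc (a 0) C) x.
Proof. exact (proj1 (a_cocone 0 k (Nat.le_0_l k) C) x). Qed.

Lemma cocone_fm_le {C : DblCat} (p : mor (tau (gammaD C))) m n hm hn :
  m <= n -> fm (ntc (a m) C) (exist _ p hm) = fm (ntc (a n) C) (exist _ p hn).
Proof.
  intros le; rewrite <- (proj2 (a_cocone m n le C) (exist _ p hm)).
  simpl; f_equal; apply sig_ext; reflexivity.
Qed.

Lemma cocone_fm {C : DblCat} (p : mor (tau (gammaD C))) m n hm hn :
  fm (ntc (a m) C) (exist _ p hm) = fm (ntc (a n) C) (exist _ p hn).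
Proof.
  destruct (Nat.le_ge_cases m n).
  - now apply cocone_fm_le.
  - symmetry; now apply cocone_fm_le.
Qed.

Definition mediator (C : DblCat) : Functor (tau (gammaD C)) (FO G C).
Proof.
  refine (@Build_Functor (tau (gammaD C)) (FO G C) (fo (ntc (a 0) C))
    (fun p => fm (ntc (a (level p)) C) (exist _ p (levelP p))) _ _ _ _).
  - intros p; rewrite fm_dom; apply cocone_fo.
  - intros p; rewrite fm_cod; apply cocone_fo.
  - intros x; rewrite (cocone_fm _ _ 0 _ (Hs_id 0 x)).
    exact (fm_idm (ntc (a 0) C) x).
  - intros f g h.
    set (K := max (level f) (level g)).
    assert (hf : Hs (gammaD C) K f) by apply Hs_max_l, levelP.
    assert (hg : Hs (gammaD C) K g) by apply Hs_max_r, levelP.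
    rewrite (cocone_fm _ _ K _ (Hs_cmp h hf hg)),
            (cocone_fm f _ K _ hf), (cocone_fm g _ K _ hg).
    assert (E : @cmp (Hcat (gammaD C) K) (exist _ g hg) (exist _ f hf)
                = exist _ (cmp g f) (Hs_cmp h hf hg))
      by (apply sig_ext, (subcat_cmpE (C := tau (gammaD C))), h).
    transitivity (fm (ntc (a K) C) (@cmp (Hcat (gammaD C) K) (exist _ g hg) (exist _ f hf))).
    + f_equal; symmetry; exact E.
    + apply fm_cmp, h.
Defined.

Lemma mediator_fo (C : DblCat) x : fo (mediator C) x = fo (ntc (a 0) C) x.
Proof. reflexivity. Qed.

Lemma mediator_fm (C : DblCat) p :
  fm (mediator C) p = fm (ntc (a (level p)) C) (exist _ p (levelP p)).
Proof. reflexivity. Qed.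

Lemma mediator_natural (C D : DblCat) (F : DFunctor C D) :
  feq (fcomp (FM G F) (mediator C)) (fcomp (mediator D) (FM gammatau F)).
Proof.
  split; cbn [fcomp fo fm].
  - intros x; pose proof (proj1 (ntnat (a 0) F) x) as nat0; cbn [fcomp fo] in nat0.
    rewrite !mediator_fo; exact nat0.
  - intros f; pose proof (proj2 (ntnat (a (level f)) F) (exist _ f (levelP f))) as natf.
    cbn [fcomp fm] in natf; rewrite !mediator_fm, natf; apply cocone_fm.
Qed.

Definition mediatorNT : NT gammatau G := @Build_NT gammatau G mediator mediator_natural.

Lemma mediator_factors n : nteq (ntcomp mediatorNT (iota n)) (a n).
Proof.
  intros C; split; cbn [ntcomp ntc mediatorNT fcomp fo fm].
  - intros x; exact (eq_trans (mediator_fo C x) (eq_sym (cocone_fo n x))).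
  - intros [p hp]; exact (eq_trans (mediator_fm C p) (cocone_fm _ _ _ _ _)).
Qed.

Lemma mediator_unique (t : NT gammatau G) :
  (forall n, nteq (ntcomp t (iota n)) (a n)) -> nteq t mediatorNT.
Proof.
  intros Ht C; split; cbn [ntc mediatorNT].
  - intros x; exact (eq_trans (proj1 (Ht 0 C) x) (eq_sym (mediator_fo C x))).
  - intros p; exact (eq_trans (proj2 (Ht (level p) C) (exist _ p (levelP p)))
                              (eq_sym (mediator_fm C p))).
Qed.

End Mediator.

Arguments mediatorNT {G a} a_cocone.
Arguments mediator_factors {G a} a_cocone n.
Arguments mediator_unique {G a} a_cocone t _.

Theorem proposition5p3 : @is_colimit_chain Hgamma nu gammatau iota.
Proof.
  split.
  - exact iota_cocone.
  - intros G a Ha; exists (mediatorNT Ha); split.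
    + exact (mediator_factors Ha).
    + exact (mediator_unique Ha).
Qed.
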